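(* Let $P_1$ be the uniform distribution on $[0,\frac12]$, let $P_2$ be the uniform distribution on $[\frac12,1]$, and let $P=\frac34P_1+\frac14P_2$. Then the set $$\Big\{\tfrac13\big(\tfrac18(21-\sqrt3)-2\big),\ \tfrac18(21-\sqrt3)-2,\ \tfrac1{24}(21-\sqrt3)\Big\}$$ forms an optimal set of three-means for $P$, with quantization error $V_3=0.00787482$.
   Context: For a finite set $\alpha\subset\mathbb R$, $V(P;\alpha)=\int\min_{a\in\alpha}(x-a)^2\,dP(x)$; $V_n=\inf\{V(P;\alpha):\mathrm{card}(\alpha)\le n\}$; an optimal set of $n$-means is a set $\alpha$ with $\mathrm{card}(\alpha)\le n$ and $V(P;\alpha)=V_n$. The numerical value of $V_3$ is a decimal approximation as given in the source. *)

From Stdlib Require Import Reals List.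
From Coquelicot Require Import Coquelicot.
Open Scope R_scope.

Definition mindist (alpha : list R) (x : R) : R :=
  match alpha with
  | nil => 0
  | a :: t => fold_right (fun b m => Rmin ((x - b) ^ 2) m) ((x - a) ^ 2) t
  end.

Definition unif_exp (a b : R) (g : R -> R) : R := RInt g a b / (b - a).

Definition EP (g : R -> R) : R :=
  3/4 * unif_exp 0 (1/2) g + 1/4 * unif_exp (1/2) 1 g.

Definition Verr (alpha : list R) : R := EP (mindist alpha).

(* admissible sets for n-means: nonempty, card <= n
   (empty set has infinite distortion, so it never competes) *)
Definition admissible (n : nat) (alpha : list R) : Prop :=
  alpha <> nil /\ (length alpha <= n)%nat.

Definition optimal_set (n : nat) (alpha : list R) : Prop :=
  admissible n alpha /\ forall beta, admissible n beta -> Verr alpha <= Verr beta.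

(* For sorted centres p <= q <= r the Voronoi cells are the intervals cut at
   (p+q)/2 and (q+r)/2, so the distortion is a sum of three cell costs, each a
   cubic polynomial in the cell endpoints and the centre, weighted by the density
   3/2 on [0,1/2] and 1/2 on [1/2,1].  For the given set it evaluates to
   (4 - sqrt 3)/288.  Conversely, if both cut points lie on the same side of 1/2,
   one cell contains a whole half of [0,1] and is already too expensive.
   Otherwise, minimising the cost over everything but the middle centre q leaves
   the cubic reduced_cost q, and reduced_cost q - (4 - sqrt 3)/288 factors as
   8/27 (q - (5 - sqrt 3)/8)^2 ((5 + 2 sqrt 3)/8 - q) >= 0. *)

From Stdlib Require Import Reals List Lra Lia Psatz.
From Coquelicot Require Import Coquelicot.
Open Scope R_scope.

Definition sq_int (c a b : R) : R := ((b - c) ^ 3 - (a - c) ^ 3) / 3.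

Lemma is_RInt_sq_int c a b : is_RInt (fun x => (x - c) ^ 2) a b (sq_int c a b).
Proof.
  replace (sq_int c a b) with
    (minus ((fun x => (x - c) ^ 3 / 3) b) ((fun x => (x - c) ^ 3 / 3) a))
    by (unfold minus, plus, opp, sq_int; simpl; field).
  apply (is_RInt_derive (fun x => (x - c) ^ 3 / 3)).
  - intros x _. auto_derive; [exact I | field].
  - intros x _.
    apply (ex_derive_continuous (K := R_AbsRing) (V := R_NormedModule)).
    auto_derive. exact I.
Qed.

Lemma is_RInt_sq_int_on g c a b : a <= b ->
  (forall x, a < x < b -> g x = (x - c) ^ 2) -> is_RInt g a b (sq_int c a b).
Proof.
  intros Hab Hg. apply is_RInt_ext with (f := fun x => (x - c) ^ 2).
  - rewrite Rmin_left, Rmax_right by lra. intros x Hx. symmetry. now apply Hg.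
  - apply is_RInt_sq_int.
Qed.

Lemma RInt_sq_int3 g p q r a u1 u2 b : a <= u1 -> u1 <= u2 -> u2 <= b ->
  (forall x, a < x < u1 -> g x = (x - p) ^ 2) ->
  (forall x, u1 < x < u2 -> g x = (x - q) ^ 2) ->
  (forall x, u2 < x < b -> g x = (x - r) ^ 2) ->
  RInt g a b = sq_int p a u1 + sq_int q u1 u2 + sq_int r u2 b.
Proof.
  intros H1 H2 H3 Hp Hq Hr. apply is_RInt_unique.
  apply (is_RInt_Chasles g a u2 b); [apply (is_RInt_Chasles g a u1 u2) |];
    now apply is_RInt_sq_int_on.
Qed.

Lemma sq_int_nil c a : sq_int c a a = 0.
Proof. unfold sq_int. field. Qed.

Lemma sq_int_ge_centered c a b : a <= b -> (b - a) ^ 3 / 12 <= sq_int c a b.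
Proof.
  intros Hab. unfold sq_int.
  assert (0 <= (b - a) * (c - (a + b) / 2) ^ 2)
    by (apply Rmult_le_pos; [lra | apply pow2_ge_0]).
  lra.
Qed.

Lemma sq_int_ge0 c a b : a <= b -> 0 <= sq_int c a b.
Proof.
  intros Hab. pose proof (sq_int_ge_centered c a b Hab).
  assert (0 <= (b - a) ^ 3) by (apply pow_le; lra). lra.
Qed.

Lemma sq_int_le_closer_centre c c' a b : a <= b ->
  (c <= c' <= a \/ b <= c' <= c) -> sq_int c' a b <= sq_int c a b.
Proof.
  intros Hab Hc.
  assert (0 <= (c' - c) * (b - a) * (a + b - c - c')).
  { destruct Hc.
    - apply Rmult_le_pos; [apply Rmult_le_pos |]; lra.
    - replace ((c' - c) * (b - a) * (a + b - c - c'))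
        with ((c - c') * (b - a) * (c + c' - a - b)) by ring.
      apply Rmult_le_pos; [apply Rmult_le_pos |]; lra. }
  unfold sq_int. lra.
Qed.

Definition min3_sq (p q r x : R) : R :=
  Rmin ((x - p) ^ 2) (Rmin ((x - q) ^ 2) ((x - r) ^ 2)).

Ltac min3_sq_cases :=
  unfold min3_sq, Rmin; repeat destruct Rle_dec; lra.

Lemma min3_sq_left p q r x : p <= q <= r -> x < (p + q) / 2 ->
  min3_sq p q r x = (x - p) ^ 2.
Proof.
  intros H Hx. assert ((x - p) ^ 2 <= (x - q) ^ 2) by nra.
  assert ((x - p) ^ 2 <= (x - r) ^ 2) by nra. min3_sq_cases.
Qed.

Lemma min3_sq_mid p q r x : p <= q <= r -> (p + q) / 2 < x < (q + r) / 2 ->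
  min3_sq p q r x = (x - q) ^ 2.
Proof.
  intros H Hx. assert ((x - q) ^ 2 <= (x - p) ^ 2) by nra.
  assert ((x - q) ^ 2 <= (x - r) ^ 2) by nra. min3_sq_cases.
Qed.

Lemma min3_sq_right p q r x : p <= q <= r -> (q + r) / 2 < x ->
  min3_sq p q r x = (x - r) ^ 2.
Proof.
  intros H Hx. assert ((x - r) ^ 2 <= (x - p) ^ 2) by nra.
  assert ((x - r) ^ 2 <= (x - q) ^ 2) by nra. min3_sq_cases.
Qed.

Lemma min3_sq_sort a b c : exists p q r, p <= q <= r /\
  forall x, min3_sq a b c x = min3_sq p q r x.
Proof.
  destruct (Rle_dec a b), (Rle_dec b c), (Rle_dec a c);
  let sorted p q r := exists p, q, r; split; [lra | intros x; min3_sq_cases] in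
  first [ sorted a b c | sorted a c b | sorted b a c
        | sorted b c a | sorted c a b | sorted c b a ].
Qed.

Lemma mindist_min3_sq beta : admissible 3 beta ->
  exists a b c, forall x, mindist beta x = min3_sq a b c x.
Proof.
  intros [Hne Hlen].
  destruct beta as [| a [| b [| c [| d t]]]]; simpl in Hlen;
    try congruence; try lia.
  - exists a, a, a. intros x. simpl. min3_sq_cases.
  - exists b, a, a. intros x. simpl. min3_sq_cases.
  - exists b, c, a. reflexivity.
Qed.

Lemma EP_ext f g : (forall x, f x = g x) -> EP f = EP g.
Proof.
  intros Hfg. unfold EP, unif_exp.
  rewrite (RInt_ext f g 0 (1/2)), (RInt_ext f g (1/2) 1); auto.
Qed.

Definition cell_cost (c a b : R) : R :=
  3/2 * sq_int c (Rmin a (1/2)) (Rmin b (1/2))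
  + 1/2 * sq_int c (Rmax a (1/2)) (Rmax b (1/2)).

Definition partition_cost (s1 s2 p q r : R) : R :=
  cell_cost p 0 s1 + cell_cost q s1 s2 + cell_cost r s2 1.

Definition clamp01 (t : R) : R := Rmax 0 (Rmin t 1).

Lemma clamp01_id t : 0 <= t <= 1 -> clamp01 t = t.
Proof. intros H. unfold clamp01. rewrite Rmin_left, Rmax_right; lra. Qed.

Lemma EP_min3_sq p q r : p <= q <= r ->
  EP (min3_sq p q r)
  = partition_cost (clamp01 ((p + q) / 2)) (clamp01 ((q + r) / 2)) p q r.
Proof.
  intros H. unfold EP, unif_exp, partition_cost, cell_cost, clamp01.
  set (t1 := (p + q) / 2). set (t2 := (q + r) / 2).
  assert (t1 <= t2) by (unfold t1, t2; lra).
  rewrite (RInt_sq_int3 _ p q r 0 (Rmin (Rmax 0 (Rmin t1 1)) (1/2))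
             (Rmin (Rmax 0 (Rmin t2 1)) (1/2)) (1/2)).
  rewrite (RInt_sq_int3 _ p q r (1/2) (Rmax (Rmax 0 (Rmin t1 1)) (1/2))
             (Rmax (Rmax 0 (Rmin t2 1)) (1/2)) 1).
  - rewrite (Rmin_left 0 (1/2)), (Rmin_right 1 (1/2)), (Rmax_right 0 (1/2)),
      (Rmax_left 1 (1/2)) by lra.
    field.
  all: try (unfold Rmin, Rmax; repeat destruct Rle_dec; lra).
  all: intros x Hx;
    first [apply min3_sq_left | apply min3_sq_mid | apply min3_sq_right]; auto;
    fold t1 t2; revert Hx; unfold Rmin, Rmax; repeat destruct Rle_dec; lra.
Qed.

Lemma cell_cost_below c a b : a <= b <= 1/2 -> cell_cost c a b = 3/2 * sq_int c a b.
Proof.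
  intros H. unfold cell_cost.
  rewrite !Rmin_left, !Rmax_right, sq_int_nil by lra. ring.
Qed.

Lemma cell_cost_above c a b : 1/2 <= a <= b -> cell_cost c a b = 1/2 * sq_int c a b.
Proof.
  intros H. unfold cell_cost.
  rewrite !Rmin_right, !Rmax_left, sq_int_nil by lra. ring.
Qed.

Lemma cell_cost_split c a b : a <= 1/2 <= b ->
  cell_cost c a b = 3/2 * sq_int c a (1/2) + 1/2 * sq_int c (1/2) b.
Proof.
  intros H. unfold cell_cost.
  rewrite (Rmin_left a), (Rmin_right b), (Rmax_right a), (Rmax_left b) by lra.
  reflexivity.
Qed.

Lemma sqrt3_bounds : 17320508 / 10000000 <= sqrt 3 <= 17320509 / 10000000.
Proof.
  pose proof (sqrt_sqrt 3 ltac:(lra)). pose proof (sqrt_pos 3). split; nra.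
Qed.

Lemma cube_le a b : a <= b -> a ^ 3 <= b ^ 3.
Proof.
  intros H.
  assert (0 <= (b - a) * ((b + a / 2) ^ 2 + 3 * a ^ 2 / 4)).
  { apply Rmult_le_pos; [lra |].
    pose proof (pow2_ge_0 (b + a / 2)). pose proof (pow2_ge_0 a). lra. }
  lra.
Qed.

Lemma cube_sum_ge a b : 0 <= a -> 0 <= b -> (a + b) ^ 3 / 4 <= a ^ 3 + b ^ 3.
Proof.
  intros Ha Hb.
  assert (0 <= (a + b) * (a - b) ^ 2)
    by (apply Rmult_le_pos; [lra | apply pow2_ge_0]).
  lra.
Qed.

Lemma partition_cost_cuts_below s1 s2 p q r : 0 <= s1 <= s2 -> s2 <= 1/2 ->
  79/10000 <= 3/2 * (sq_int p 0 s1 + sq_int q s1 s2 + sq_int r s2 (1/2))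
              + 1/2 * sq_int r (1/2) 1.
Proof.
  intros H1 H2.
  pose proof (sq_int_ge_centered p 0 s1 ltac:(lra)).
  pose proof (sq_int_ge_centered q s1 s2 ltac:(lra)).
  pose proof (cube_sum_ge (s1 - 0) (s2 - s1) ltac:(lra) ltac:(lra)).
  assert (3/2 * (sq_int p 0 s1 + sq_int q s1 s2) >= s2 ^ 3 / 32) by lra.
  destruct (Rle_dec r (5/16)) as [Hr | Hr].
  { pose proof (sq_int_ge0 r s2 (1/2) ltac:(lra)).
    pose proof (sq_int_le_closer_centre r (5/16) (1/2) 1 ltac:(lra) ltac:(lra)).
    assert (0 <= s2 ^ 3) by (apply pow_le; lra).
    unfold sq_int in *. lra. }
  destruct (Rle_dec r (5/8)) as [Hr' | Hr'].
  { assert (0 <= (s2 - 4 * r / 5) ^ 2 * (3 * r / 4 - 15 * s2 / 32))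
      by (apply Rmult_le_pos; [apply pow2_ge_0 | lra]).
    assert (0 <= r ^ 3) by (apply pow_le; lra).
    pose proof (cube_le (-1/8) (1/2 - r) ltac:(lra)).
    pose proof (cube_le (3/8) (1 - r) ltac:(lra)).
    unfold sq_int in *. lra. }
  pose proof (sq_int_ge_centered r (1/2) 1 ltac:(lra)).
  assert (0 <= (1/2 - s2) * ((r - s2) ^ 2 + (r - s2) * (r - 1/2) + (r - 1/2) ^ 2 - 3/64))
    by (apply Rmult_le_pos; nra).
  assert (0 <= (s2 - 1/2) ^ 2 * (s2 + 1))
    by (apply Rmult_le_pos; [apply pow2_ge_0 | lra]).
  unfold sq_int in *. lra.
Qed.

Lemma partition_cost_cuts_above s1 s2 p q r : 1/2 <= s1 <= s2 -> s2 <= 1 ->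
  1/64 <= 3/2 * sq_int p 0 (1/2)
          + 1/2 * (sq_int p (1/2) s1 + sq_int q s1 s2 + sq_int r s2 1).
Proof.
  intros H1 H2.
  pose proof (sq_int_ge_centered p 0 (1/2) ltac:(lra)).
  pose proof (sq_int_ge0 p (1/2) s1 ltac:(lra)).
  pose proof (sq_int_ge0 q s1 s2 ltac:(lra)).
  pose proof (sq_int_ge0 r s2 1 ltac:(lra)).
  lra.
Qed.

(* For fixed q the optimal cuts are s1 = 2q/3 and s2 = (1+2q)/3, with p and r
   at the midpoints of their cells; the squared factors below vanish there. *)
Lemma left_cells_cost_ge s1 p q : 0 <= s1 <= 1/2 -> 3/16 <= q ->
  (1/2 - q) ^ 3 / 2 + q ^ 3 / 18 <= 3/2 * (sq_int p 0 s1 + sq_int q s1 (1/2)).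
Proof.
  intros H1 Hq. pose proof (sq_int_ge_centered p 0 s1 ltac:(lra)).
  assert (0 <= (s1 - 2 * q / 3) ^ 2 * (q - 3 * s1 / 8))
    by (apply Rmult_le_pos; [apply pow2_ge_0 | lra]).
  unfold sq_int in *. lra.
Qed.

Lemma right_cells_cost_ge s2 q r : 1/2 <= s2 <= 1 -> q <= 13/16 ->
  (1 - q) ^ 3 / 54 - (1/2 - q) ^ 3 / 6
  <= 1/2 * (sq_int q (1/2) s2 + sq_int r s2 1).
Proof.
  intros H2 Hq. pose proof (sq_int_ge_centered r s2 1 ltac:(lra)).
  assert (0 <= (s2 - (1 + 2 * q) / 3) ^ 2 * (s2 / 8 + (1 - q) / 3 - 1/8))
    by (apply Rmult_le_pos; [apply pow2_ge_0 | lra]).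
  unfold sq_int in *. lra.
Qed.

Definition reduced_cost (q : R) : R := (1/2 - q) ^ 3 / 3 + q ^ 3 / 18 + (1 - q) ^ 3 / 54.

Lemma reduced_cost_factor q :
  reduced_cost q - (4 - sqrt 3) / 288
  = 8/27 * (q - (5 - sqrt 3) / 8) ^ 2 * ((5 + 2 * sqrt 3) / 8 - q).
Proof.
  pose proof (sqrt_sqrt 3 ltac:(lra)) as Hk. set (k := sqrt 3) in *.
  assert (E : reduced_cost q - (4 - k) / 288 - 8/27 * (q - (5 - k) / 8) ^ 2 * ((5 + 2 * k) / 8 - q)
              = (k * k - 3) * (5/576 - q/72 - k/864)) by (unfold reduced_cost; field).
  rewrite Hk in E. lra.
Qed.

Lemma partition_cost_centre_mid s1 s2 p q r :
  0 <= s1 <= 1/2 -> 1/2 <= s2 <= 1 -> 3/16 <= q <= 13/16 ->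
  (4 - sqrt 3) / 288
  <= 3/2 * (sq_int p 0 s1 + sq_int q s1 (1/2)) + 1/2 * (sq_int q (1/2) s2 + sq_int r s2 1).
Proof.
  intros H1 H2 Hq. pose proof sqrt3_bounds.
  pose proof (left_cells_cost_ge s1 p q H1 ltac:(lra)).
  pose proof (right_cells_cost_ge s2 q r H2 ltac:(lra)).
  assert (0 <= 8/27 * (q - (5 - sqrt 3) / 8) ^ 2 * ((5 + 2 * sqrt 3) / 8 - q)).
  { apply Rmult_le_pos; [apply Rmult_le_pos; [lra | apply pow2_ge_0] | lra]. }
  rewrite <- reduced_cost_factor in *. unfold reduced_cost in *. lra.
Qed.

Lemma partition_cost_centre_low s1 s2 p q r :
  0 <= s1 <= 1/2 -> 1/2 <= s2 <= 1 -> q <= 3/16 ->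
  7/768 <= 3/2 * (sq_int p 0 s1 + sq_int q s1 (1/2)) + 1/2 * (sq_int q (1/2) s2 + sq_int r s2 1).
Proof.
  intros H1 H2 Hq.
  pose proof (sq_int_ge_centered p 0 s1 ltac:(lra)).
  pose proof (sq_int_ge_centered r s2 1 ltac:(lra)).
  pose proof (sq_int_ge_centered q s1 (1/2) ltac:(lra)).
  pose proof (sq_int_le_closer_centre q (3/16) (1/2) s2 ltac:(lra) ltac:(lra)).
  pose proof (cube_sum_ge (s1 - 0) (1/2 - s1) ltac:(lra) ltac:(lra)).
  assert (0 <= (s2 - 1/2) * ((s2 - 3/16) ^ 2 / 2 - (1 - s2) ^ 2 / 8))
    by (apply Rmult_le_pos; nra).
  assert ((1 - s2) ^ 3 / 24 + ((s2 - 3/16) ^ 3 - (5/16) ^ 3) / 6 >= 1/192).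
  { pose proof (pow2_ge_0 (s2 - 1/2)).
    assert (0 <= (s2 - 1/2) ^ 3) by (apply pow_le; lra). nra. }
  unfold sq_int in *. lra.
Qed.

Lemma partition_cost_centre_high s1 s2 p q r :
  0 <= s1 <= 1/2 -> 1/2 <= s2 <= 1 -> 13/16 <= q ->
  1/64 <= 3/2 * (sq_int p 0 s1 + sq_int q s1 (1/2)) + 1/2 * (sq_int q (1/2) s2 + sq_int r s2 1).
Proof.
  intros H1 H2 Hq.
  pose proof (sq_int_ge_centered p 0 s1 ltac:(lra)).
  pose proof (sq_int_ge0 r s2 1 ltac:(lra)).
  pose proof (sq_int_ge0 q (1/2) s2 ltac:(lra)).
  pose proof (sq_int_le_closer_centre q (13/16) s1 (1/2) ltac:(lra) ltac:(lra)).
  assert (0 <= (1/2 - s1) * ((13/16 - s1) ^ 2 / 2 - s1 ^ 2 / 8))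
    by (apply Rmult_le_pos; nra).
  assert (s1 ^ 3 / 8 + ((13/16 - s1) ^ 3 - (5/16) ^ 3) / 2 >= 1/64).
  { pose proof (pow2_ge_0 (s1 - 1/2)).
    assert (0 <= (1/2 - s1) ^ 3) by (apply pow_le; lra). nra. }
  unfold sq_int in *. lra.
Qed.

Lemma partition_cost_ge s1 s2 p q r : 0 <= s1 <= s2 -> s2 <= 1 ->
  (4 - sqrt 3) / 288 <= partition_cost s1 s2 p q r.
Proof.
  intros H1 H2. pose proof sqrt3_bounds. unfold partition_cost.
  destruct (Rle_dec s2 (1/2)) as [Hs2 | Hs2].
  { rewrite (cell_cost_below p), (cell_cost_below q), (cell_cost_split r) by lra.
    pose proof (partition_cost_cuts_below s1 s2 p q r H1 Hs2). lra. }
  destruct (Rle_dec s1 (1/2)) as [Hs1 | Hs1].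
  2:{ rewrite (cell_cost_split p), (cell_cost_above q), (cell_cost_above r) by lra.
      pose proof (partition_cost_cuts_above s1 s2 p q r ltac:(lra) H2). lra. }
  rewrite (cell_cost_below p), (cell_cost_split q), (cell_cost_above r) by lra.
  assert (H1' : 0 <= s1 <= 1/2) by lra. assert (H2' : 1/2 <= s2 <= 1) by lra.
  destruct (Rle_dec q (3/16)) as [Hq | Hq].
  { pose proof (partition_cost_centre_low s1 s2 p q r H1' H2' Hq). lra. }
  destruct (Rle_dec q (13/16)) as [Hq' | Hq'].
  { pose proof (partition_cost_centre_mid s1 s2 p q r H1' H2' ltac:(lra)). lra. }
  pose proof (partition_cost_centre_high s1 s2 p q r H1' H2' ltac:(lra)). lra.
Qed.

Lemma Verr_ge beta : admissible 3 beta -> (4 - sqrt 3) / 288 <= Verr beta.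
Proof.
  intros Hb. destruct (mindist_min3_sq beta Hb) as (a & b & c & Hmin).
  destruct (min3_sq_sort a b c) as (p & q & r & Hs & Hsort).
  unfold Verr. rewrite (EP_ext _ (min3_sq p q r)) by congruence.
  rewrite EP_min3_sq by exact Hs.
  apply partition_cost_ge; unfold clamp01, Rmax, Rmin; repeat destruct Rle_dec; lra.
Qed.

Theorem lemma4p5 :
  let b := (21 - sqrt 3) / 8 - 2 in
  let alpha := (b / 3 :: b :: (21 - sqrt 3) / 24 :: nil) in
  optimal_set 3 alpha /\ Rabs (Verr alpha - 787482 / 10 ^ 8) <= 5 / 10 ^ 9.
Proof.
  intros b alpha. pose proof sqrt3_bounds.
  pose proof (sqrt_sqrt 3 ltac:(lra)) as Hk.
  assert (Hadm : admissible 3 alpha) by (split; [discriminate | simpl; lia]).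
  assert (HV : Verr alpha = (4 - sqrt 3) / 288).
  { unfold Verr.
    rewrite (EP_ext _ (min3_sq (b / 3) b ((21 - sqrt 3) / 24)))
      by (intros x; simpl; min3_sq_cases).
    unfold b. rewrite EP_min3_sq, !clamp01_id by lra. unfold partition_cost.
    rewrite cell_cost_below, cell_cost_split, cell_cost_above by lra.
    set (k := sqrt 3) in *. unfold sq_int.
    assert (k ^ 2 = 3) by lra. assert (k ^ 3 = 3 * k) by nra.
    lra. }
  split.
  - split; [exact Hadm |]. intros beta Hb. rewrite HV. now apply Verr_ge.
  - rewrite HV. unfold Rabs. destruct Rcase_abs; lra.
Qed.
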